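(* Let $n\ge2$, $F\in GL^+(n)$, $\mu>0$, $\mu_c\ge0$. If $X$ is a symmetric matrix with $X^2=FF^T$ and $\det X>0$, then $R=X^TF^{-T}\in SO(n)$ is a critical point of $\widetilde W_{\mu,\mu_c}(\cdot;F)$. In particular, the orthogonal factor $R_p$ of the polar decomposition $F=R_pU$ ($R_p\in SO(n)$, $U$ symmetric positive definite) is a critical point of $\widetilde W_{\mu,\mu_c}(\cdot;F)$.
   Context: $\mathrm{sym}(Y)=\tfrac12(Y+Y^T)$, $\mathrm{skew}(Y)=\tfrac12(Y-Y^T)$, $\|Y\|^2=\mathrm{tr}(Y^TY)$. For $F\in GL^+(n)$ (positive determinant), $\mu>0$, $\mu_c\ge0$: $\widetilde W_{\mu,\mu_c}(R;F)=\mu\|\mathrm{sym}(R^TF-\mathbb I_n)\|^2+\mu_c\|\mathrm{skew}(R^TF-\mathbb I_n)\|^2$ for $R\in SO(n)$; critical points are those of its restriction to the submanifold $SO(n)\subset\mathcal M_{n\times n}(\mathbb R)$. *)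

From HB Require Import structures.
From mathcomp Require Import all_boot all_order all_algebra.
Set Implicit Arguments. Unset Strict Implicit. Unset Printing Implicit Defensive.
Import Order.TTheory GRing.Theory Num.Theory.
Local Open Scope ring_scope.

(* sym(Y) = 1/2 (Y + Y^T), skew(Y) = 1/2 (Y - Y^T), ||Y||^2 = tr(Y^T Y);
   stated over any commutative unit ring (so that they also make sense over
   polynomials {poly K}, used to define directional derivatives). *)
Definition msym {K : comUnitRingType} {n : nat} (Y : 'M[K]_n) : 'M[K]_n :=
  (2%:R)^-1 *: (Y + Y^T).
Definition mskew {K : comUnitRingType} {n : nat} (Y : 'M[K]_n) : 'M[K]_n :=
  (2%:R)^-1 *: (Y - Y^T).
Definition mnormsq {K : comUnitRingType} {n : nat} (Y : 'M[K]_n) : K :=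
  \tr (Y^T *m Y).

Definition Wt {K : comUnitRingType} {n : nat} (mu muc : K) (F R : 'M[K]_n) : K :=
  mu * mnormsq (msym (R^T *m F - 1%:M)) + muc * mnormsq (mskew (R^T *m F - 1%:M)).

(* Directional (Gateaux) derivative of the polynomial map R |-> W~(R;F) on
   M_{n x n}(K) at R in direction H:  d/dt W~(R + t H; F) at t = 0,
   computed exactly via the polynomial t |-> W~(R + t H; F) in {poly K}. *)
Definition dWt {K : realFieldType} {n : nat} (mu muc : K) (F R H : 'M[K]_n) : K :=
  ((Wt mu%:P muc%:P (map_mx polyC F)
       (map_mx polyC R + 'X *: map_mx polyC H))^`()).[0].

Definition inSO {K : realFieldType} {n : nat} (R : 'M[K]_n) : Prop :=
  R^T *m R = 1%:M /\ \det R = 1.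

Definition inGLplus {K : realFieldType} {n : nat} (F : 'M[K]_n) : Prop :=
  0 < \det F.

(* Tangent space of SO(n) at R: { R A | A^T = -A }. *)
Definition critical_SO {K : realFieldType} {n : nat} (mu muc : K) (F R : 'M[K]_n)
  : Prop :=
  inSO R /\ forall A : 'M[K]_n, A^T = - A -> dWt mu muc F R (R *m A) = 0.

Definition posdef {K : realFieldType} {n : nat} (U : 'M[K]_n) : Prop :=
  U^T = U /\ forall v : 'cV[K]_n, v != 0 -> 0 < (v^T *m U *m v) 0 0.

From HB Require Import structures.
From mathcomp Require Import all_boot all_order all_algebra.
From mathcomp Require Import ring lra.
Import Order.TTheory GRing.Theory Num.Theory.
Local Open Scope ring_scope.

(* Along the line R + tH the energy W~(R + tH; F) is a quadratic
   polynomial in t, with P := R^T F - 1 and Q := H^T F as constant and linear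
   parts inside sym and skew.  Its derivative at t = 0 is therefore
      dW~ = 2 mu tr(sym P^T sym Q) + 2 mu_c tr(skew P^T skew Q).
   If R in SO(n) and the stretch U := R^T F is symmetric, then P is
   symmetric, so skew P = 0 and sym P = P; for a tangent direction H = R A
   with A skew, Q = A^T U and tr(P sym Q) = tr(P A^T U) = -tr((U P) A) = 0,
   because U P is symmetric and A skew.  Hence every rotation with
   symmetric stretch is critical (critical_of_symmetric_stretch).
   Both parts of the theorem are instances: for a symmetric square root X
   of F F^T with det X > 0, R = X^T F^{-T} is a rotation with
   R^T F = F^T X^{-1} F symmetric; for the polar factor, R_p^T F = U. *)

Section PencilExpansion.
Variables (K : fieldType) (n : nat).
Local Notation lift := (map_mx (@polyC K)).

Lemma mxtrace_lift (A : 'M[K]_n) : \tr (lift A) = (\tr A)%:P.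
Proof. by rewrite /mxtrace rmorph_sum; apply: eq_bigr => i _; rewrite mxE. Qed.

Lemma trmx_pencil (A B : 'M[K]_n) :
  (lift A + 'X *: lift B)^T = lift A^T + 'X *: lift B^T.
Proof. by apply/matrixP => i j; rewrite !mxE. Qed.

Lemma inv2_polyC : (2%:R : {poly K})^-1 = (2%:R^-1)%:P.
Proof. by rewrite -polyC_natr polyCV. Qed.

Lemma msym_pencil (A B : 'M[K]_n) :
  msym (lift A + 'X *: lift B) = lift (msym A) + 'X *: lift (msym B).
Proof.
rewrite /msym inv2_polyC; apply/matrixP => i j; rewrite !mxE.
by rewrite !(rmorphD, rmorphM, rmorphB) /=; ring.
Qed.

Lemma mskew_pencil (A B : 'M[K]_n) :
  mskew (lift A + 'X *: lift B) = lift (mskew A) + 'X *: lift (mskew B).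
Proof.
rewrite /mskew inv2_polyC; apply/matrixP => i j; rewrite !mxE.
by rewrite !(rmorphD, rmorphM, rmorphB) /=; ring.
Qed.

Lemma mnormsq_pencil (A B : 'M[K]_n) :
  mnormsq (lift A + 'X *: lift B) =
  (mnormsq A)%:P + 'X * ((2%:R * \tr (A^T *m B))%:P + 'X * (mnormsq B)%:P).
Proof.
have cross : \tr (B^T *m A) = \tr (A^T *m B).
  by rewrite -mxtrace_tr trmx_mul trmxK.
rewrite /mnormsq trmx_pencil mulmxDl !mulmxDr -!scalemxAl -!scalemxAr.
rewrite !mxtraceD !mxtraceZ -!map_mxM !mxtrace_lift cross mulr_natl mulr2n.
by rewrite rmorphD /= !mulrDr !addrA.
Qed.

Lemma stretch_pencil (F R H : 'M[K]_n) :
  (lift R + 'X *: lift H)^T *m lift F - 1%:M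
  = lift (R^T *m F - 1%:M) + 'X *: lift (H^T *m F).
Proof.
rewrite trmx_pencil mulmxDl -scalemxAl -!map_mxM map_mxB map_mx1.
by rewrite addrAC.
Qed.
End PencilExpansion.

Lemma dWtE {K : realFieldType} {n : nat} (mu muc : K) (F R H : 'M[K]_n) :
  let P := R^T *m F - 1%:M in let Q := H^T *m F in
  dWt mu muc F R H =
  2%:R * (mu * \tr ((msym P)^T *m msym Q) + muc * \tr ((mskew P)^T *m mskew Q)).
Proof.
move=> P Q; rewrite /dWt /Wt stretch_pencil msym_pencil mskew_pencil.
rewrite !mnormsq_pencil horner_coef0 coef_deriv !coefE /=.
by rewrite !add0r !mul0r !addr0; ring.
Qed.

Section TraceFacts.
Variables (K : numFieldType) (n : nat).
Implicit Types (S A Y : 'M[K]_n).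

Lemma mxtrace_sym_skew S A : S^T = S -> A^T = - A -> \tr (S *m A) = 0.
Proof.
move=> symS skewA.
have opp : \tr (S *m A) = - \tr (S *m A).
  by rewrite -{1}mxtrace_tr trmx_mul skewA symS mulNmx linearN /= mxtrace_mulC.
by apply/eqP; move/eqP: opp; rewrite -subr_eq0 opprK -mulr2n mulrn_eq0.
Qed.

Lemma mxtrace_msymr S Y : S^T = S -> \tr (S *m msym Y) = \tr (S *m Y).
Proof.
move=> symS; have flip : \tr (S *m Y^T) = \tr (S *m Y).
  by rewrite -mxtrace_tr trmx_mul trmxK symS mxtrace_mulC.
rewrite /msym -scalemxAr mxtraceZ mulmxDr mxtraceD flip -mulr2n.
by rewrite -[X in _ * X]mulr_natl mulrA mulVf ?mul1r // pnatr_eq0.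
Qed.

Lemma msym_id S : S^T = S -> msym S = S.
Proof.
move=> symS; rewrite /msym symS -mulr2n -scaler_nat scalerA mulVf ?scale1r //.
by rewrite pnatr_eq0.
Qed.

Lemma mskew0 S : S^T = S -> mskew S = 0.
Proof. by move=> symS; rewrite /mskew symS subrr scaler0. Qed.
End TraceFacts.

Lemma critical_of_symmetric_stretch {K : realFieldType} {n : nat}
    (mu muc : K) (F R : 'M[K]_n) :
  inSO R -> (R^T *m F)^T = R^T *m F -> critical_SO mu muc F R.
Proof.
move=> SO_R symU; split=> // A skewA; rewrite dWtE.
set U := R^T *m F in symU *; set P := U - 1%:M.
have symP : P^T = P by rewrite /P linearB /= symU trmx1.
have symUP : (U *m P)^T = U *m P.
  by rewrite trmx_mul symP symU /P mulmxBr mulmxBl mulmx1 mul1mx.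
have -> : (R *m A)^T *m F = A^T *m U by rewrite trmx_mul -mulmxA.
have sym_term : \tr (P *m msym (A^T *m U)) = 0.
  rewrite mxtrace_msymr // mxtrace_mulC -mulmxA mxtrace_mulC skewA mulmxN.
  by rewrite linearN /= mxtrace_sym_skew ?oppr0.
by rewrite mskew0 // msym_id // symP sym_term trmx0 mul0mx mxtrace0 !mulr0 addr0 mulr0.
Qed.

Lemma sqrt_rotation {K : realFieldType} {n : nat} {F X : 'M[K]_n} :
  inGLplus F -> X^T = X -> X *m X = F *m F^T -> 0 < \det X ->
  let R := X^T *m (invmx F)^T in inSO R /\ (R^T *m F)^T = R^T *m F.
Proof.
move=> detF symX sqX detX R.
have unitF : F \in unitmx by rewrite unitmxE unitfE lt0r_neq0.
have unitX : X \in unitmx by rewrite unitmxE unitfE lt0r_neq0.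
have RT : R^T = invmx F *m X by rewrite /R trmx_mul !trmxK.
have orth : R^T *m R = 1%:M.
  rewrite RT /R symX -mulmxA (mulmxA X) sqX trmx_inv -!mulmxA mulmxV ?unitmx_tr //.
  by rewrite mulmx1 mulVmx.
have detR : \det R * \det R = 1 by rewrite -{1}det_tr -det_mulmx orth det1.
have detR_pos : 0 < \det R.
  by rewrite /R det_mulmx !det_tr det_inv mulr_gt0 ?invr_gt0.
have stretch : R^T *m F = F^T *m invmx X *m F.
  rewrite RT -{2}(mulKVmx unitX F) !mulmxA -(mulmxA (invmx F) X X) sqX.
  by rewrite !mulmxA mulVmx // mul1mx.
split; first by split=> //; nra.
by rewrite stretch !trmx_mul trmxK trmx_inv symX mulmxA.
Qed.

Theorem mainTheorem2 (K : realFieldType) (n : nat) (F : 'M[K]_n) (mu muc : K) :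
  (2 <= n)%N -> inGLplus F -> 0 < mu -> 0 <= muc ->
  (forall X : 'M[K]_n, X^T = X -> X *m X = F *m F^T -> 0 < \det X ->
     inSO (X^T *m (invmx F)^T) /\ critical_SO mu muc F (X^T *m (invmx F)^T)) /\
  (forall Rp U : 'M[K]_n, inSO Rp -> posdef U -> F = Rp *m U ->
     critical_SO mu muc F Rp).
Proof.
move=> _ GLF _ _; split.
  move=> X symX sqX detX.
  have [SO_R symU] := sqrt_rotation GLF symX sqX detX.
  by split; last apply: critical_of_symmetric_stretch.
move=> Rp U SO_Rp [symU _] polar; apply: critical_of_symmetric_stretch => //.
by rewrite polar mulmxA (proj1 SO_Rp) mul1mx.
Qed.
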